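(* Let $G$ be a group. Then $G$ is sofic as a group if and only if $G$ is sofic as a monoid.
   Context: For a non-empty finite set $X$, $\mathrm{Map}(X)$ is the monoid of all maps $X\to X$ under composition (identity $\mathrm{Id}_X$), and $\mathrm{Sym}(X)$ its group of bijections; both carry the Hamming metric $d_X(f,g)=|\{x\in X : f(x)\ne g(x)\}|/|X|$. A group $G$ is sofic as a group if for every finite $K\subset G$ and every $\varepsilon>0$ there exist a non-empty finite set $X$ and a map $\varphi\colon G\to\mathrm{Sym}(X)$ such that $d_X(\varphi(gh),\varphi(g)\varphi(h))\le\varepsilon$ for all $g,h\in K$ and $d_X(\varphi(g),\varphi(h))\ge 1-\varepsilon$ for all distinct $g,h\in K$ (the standard notion of sofic group). For a monoid $M$, finite $K\subset M$ and $\varepsilon,\alpha>0$, a map $\varphi\colon M\to\mathrm{Map}(X)$ is a $(K,\varepsilon)$-morphism if $d_X(\varphi(k_1k_2),\varphi(k_1)\varphi(k_2))\le\varepsilon$ for all $k_1,k_2\in K$ and $d_X(\varphi(1_M),\mathrm{Id}_X)\le\varepsilon$; it is $(K,\alpha)$-injective if $d_X(\varphi(k_1),\varphi(k_2))\ge\alpha$ for all distinct $k_1,k_2\in K$. A monoid $M$ is sofic (as a monoid) if for every finite $K\subset M$ and $\varepsilon>0$ there are a non-empty finite set $X$ and a $(K,1-\varepsilon)$-injective $(K,\varepsilon)$-morphism $\varphi\colon M\to\mathrm{Map}(X)$. *)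

From HB Require Import structures.
From mathcomp Require Import all_boot all_order all_algebra all_fingroup.
From mathcomp Require Import Rstruct.
From Stdlib Require List.
From Stdlib Require Rdefinitions.
Notation R := Rdefinitions.R.
Set Implicit Arguments.
Unset Strict Implicit.
Unset Printing Implicit Defensive.
Import Order.TTheory GRing.Theory Num.Theory.
Local Open Scope ring_scope.

Definition hamming (X : finType) (f g : X -> X) : R :=
  (#|[set x | f x != g x]|)%:R / (#|X|)%:R.

Definition fcomp (X : Type) (f g : X -> X) : X -> X := fun x => f (g x).

Definition is_monoid (M : Type) (mul : M -> M -> M) (one : M) : Prop :=
  (forall a b c, mul a (mul b c) = mul (mul a b) c) /\
  (forall a, mul one a = a) /\ (forall a, mul a one = a).

Definition is_group (G : Type) (mul : G -> G -> G) (one : G) (inv : G -> G)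
  : Prop :=
  is_monoid mul one /\
  (forall a, mul (inv a) a = one) /\ (forall a, mul a (inv a) = one).

(* Sofic as a group (finite subsets K are given by lists). *)
Definition sofic_group (G : Type) (mul : G -> G -> G) : Prop :=
  forall (K : list G) (eps : R), 0 < eps ->
  exists (X : finType) (phi : G -> {perm X}),
    (0 < #|X|)%N /\
    (forall g h, List.In g K -> List.In h K ->
       hamming (phi (mul g h)) (fcomp (phi g) (phi h)) <= eps) /\
    (forall g h, List.In g K -> List.In h K -> g <> h ->
       1 - eps <= hamming (phi g) (phi h)).

Definition KE_morphism (M : Type) (mul : M -> M -> M) (one : M)
  (K : list M) (eps : R) (X : finType) (phi : M -> X -> X) : Prop :=
  (forall k1 k2, List.In k1 K -> List.In k2 K ->
     hamming (phi (mul k1 k2)) (fcomp (phi k1) (phi k2)) <= eps) /\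
  hamming (phi one) id <= eps.

Definition KA_injective (M : Type) (K : list M) (alpha : R)
  (X : finType) (phi : M -> X -> X) : Prop :=
  forall k1 k2, List.In k1 K -> List.In k2 K -> k1 <> k2 ->
    alpha <= hamming (phi k1) (phi k2).

Definition sofic_monoid (M : Type) (mul : M -> M -> M) (one : M) : Prop :=
  forall (K : list M) (eps : R), 0 < eps ->
  exists (X : finType) (phi : M -> X -> X),
    (0 < #|X|)%N /\ KA_injective K (1 - eps) phi /\
    KE_morphism mul one K eps phi.

(** The two notions differ only in that a monoid approximation takes values in
    arbitrary self-maps and must also send [1] close to the identity.  A group
    approximation [phi] already has this: [phi 1] is a permutation close to
    [phi 1 \o phi 1], and cancelling the injective [phi 1] makes it close to
    the identity.  Conversely, if [phi] is a monoid approximation on a set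
    containing [g] and [g^-1], then [phi g \o phi g^-1] is close to
    [phi 1], hence to the identity, so [phi g] is injective outside a small set
    and agrees there with some permutation [sigma g].  Replacing [phi] by
    [sigma] costs a bounded multiple of [eps] in every estimate. *)

From mathcomp Require Import all_boot all_order all_algebra all_fingroup.
From mathcomp Require Import Rstruct lra zify.
From Stdlib Require List.

Set Implicit Arguments.
Unset Strict Implicit.
Unset Printing Implicit Defensive.
Import Order.TTheory GRing.Theory Num.Theory.
Local Open Scope ring_scope.

Section Hamming.
Variable X : finType.
Implicit Types (f g h : X -> X) (s t u : {perm X}).

Lemma hamming_sym f g : hamming f g = hamming g f.
Proof.
by rewrite /hamming; congr (_%:R / _); apply: eq_card => x; rewrite !inE eq_sym.
Qed.

Lemma hamming_triangle f g h : hamming f h <= hamming f g + hamming g h.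
Proof.
rewrite /hamming -mulrDl ler_wpM2r ?invr_ge0 ?ler0n // -natrD ler_nat.
apply: leq_trans (leq_card_setU _ _); apply: subset_leq_card.
apply/subsetP => x; rewrite !inE.
by case: (eqVneq (f x) (g x)) => [->|].
Qed.

Lemma hamming_compl f g h : hamming (fcomp f g) (fcomp f h) <= hamming g h.
Proof.
rewrite /hamming ler_wpM2r ?invr_ge0 ?ler0n // ler_nat.
apply: subset_leq_card; apply/subsetP => x; rewrite !inE /fcomp.
by apply: contra => /eqP ->.
Qed.

Lemma hamming_compl_inj f g h : injective f ->
  hamming (fcomp f g) (fcomp f h) = hamming g h.
Proof.
move=> f_inj; rewrite /hamming; congr (_%:R / _).
by apply: eq_card => x; rewrite !inE /fcomp (inj_eq f_inj).
Qed.

Lemma hamming_compr_perm f g s : hamming (fcomp f s) (fcomp g s) = hamming f g.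
Proof.
rewrite /hamming; congr (_%:R / _).
rewrite -[RHS](card_preimset _ (@perm_inj _ s)).
by apply: eq_card => x; rewrite !inE.
Qed.

Lemma hamming_comp_perm f f' g s :
  hamming (fcomp f g) (fcomp f' s) <= hamming g s + hamming f f'.
Proof.
apply: le_trans (hamming_triangle _ (fcomp f s) _) _.
by rewrite hamming_compr_perm lerD2r hamming_compl.
Qed.

Lemma perm_extension (A : {set X}) f : {in A &, injective f} ->
  exists s, {in A, s =1 f}.
Proof.
move=> f_inj; pose B := ~: A; pose C := ~: (f @: A).
have card_BC : #|B| = #|C|.
  have := cardsC A; have := cardsC (f @: A).
  by rewrite card_in_imset // /B /C; lia.
have idx_lt x : x \in B -> (index x (enum B) < size (enum C))%N.
  by move=> xB; rewrite -cardE -card_BC cardE index_mem mem_enum.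
(* Outside [A], send the [i]-th element of [B] to the [i]-th element of [C]. *)
pose g x := if x \in A then f x else nth x (enum C) (index x (enum B)).
have gC x : x \notin A -> g x \in C.
  by move=> xA; rewrite /g (negbTE xA) -mem_enum mem_nth // idx_lt // inE.
have g_inj : injective g.
  move=> x y; case xA: (x \in A); case yA: (y \in A).
  - by rewrite /g xA yA; apply: f_inj.
  - by move=> e; have := gC y (negbT yA); rewrite -e /g xA inE imset_f.
  - by move=> e; have := gC x (negbT xA); rewrite e /g yA inE imset_f.
  - have xB : x \in B by rewrite inE xA.
    have yB : y \in B by rewrite inE yA.
    rewrite /g xA yA (set_nth_default x y (idx_lt y yB)).
    move/eqP; rewrite nth_uniq ?enum_uniq ?idx_lt // => /eqP e.
    rewrite -(nth_index x (_ : x \in enum B)) ?mem_enum // e.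
    by rewrite nth_index ?mem_enum.
by exists (perm g_inj) => x xA; rewrite permE /g xA.
Qed.

(* [f] is injective on the image under [h] of the set where [f \o h] is the
   identity, and that image is as large as the set itself. *)
Lemma exists_perm_near f h : exists s, hamming f s <= hamming (fcomp f h) id.
Proof.
pose D := [set x | f (h x) == x].
have h_inj : {in D &, injective h}.
  by move=> x y; rewrite !inE => /eqP ex /eqP ey e; rewrite -ex -ey e.
have f_inj : {in h @: D &, injective f}.
  move=> _ _ /imsetP[x xD ->] /imsetP[y yD ->] e.
  by move: xD yD; rewrite !inE => /eqP ex /eqP ey; rewrite -ex -ey e.
have [s sf] := perm_extension f_inj; exists s.
rewrite /hamming ler_wpM2r ?invr_ge0 ?ler0n // ler_nat.
apply: (@leq_trans #|~: (h @: D)|).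
  apply: subset_leq_card; apply/subsetP => x; rewrite !inE.
  by apply: contraR => /negbNE /sf ->.
have -> : [set x | fcomp f h x != id x] = ~: D by apply/setP => x; rewrite !inE.
have := cardsC D; have := cardsC (h @: D); rewrite card_in_imset //; lia.
Qed.

Definition perm_approx f h : {perm X} :=
  odflt 1%g [pick s : {perm X} | hamming f s <= hamming (fcomp f h) id].

Lemma perm_approxP f h : hamming f (perm_approx f h) <= hamming (fcomp f h) id.
Proof.
rewrite /perm_approx; case: pickP => [s //|no_s] /=.
by have [s] := exists_perm_near f h; rewrite no_s.
Qed.

Lemma perm_approx_close f h (u : X -> X) (e e' : R) :
  hamming u (fcomp f h) <= e -> hamming u id <= e' ->
  hamming f (perm_approx f h) <= e + e'.
Proof.
move=> uf u1; apply: le_trans (perm_approxP f h) _.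
apply: le_trans (hamming_triangle _ u _) _.
by rewrite hamming_sym lerD.
Qed.

Lemma hamming_perturb_comp f g h s t u (d e : R) :
  hamming f s <= d -> hamming g t <= d -> hamming h u <= d ->
  hamming h (fcomp f g) <= e -> hamming u (fcomp s t) <= 3 * d + e.
Proof.
move=> fs gt hu hfg.
have := hamming_triangle u h (fcomp s t).
have := hamming_triangle h (fcomp f g) (fcomp s t).
have := hamming_comp_perm f s g t.
have := hamming_sym h u; lra.
Qed.

Lemma hamming_perturb f g s t (d : R) :
  hamming f s <= d -> hamming g t <= d -> hamming f g - 2 * d <= hamming s t.
Proof.
move=> fs gt.
have := hamming_triangle f s g; have := hamming_triangle s t g.
have := hamming_sym g t; lra.
Qed.

End Hamming.

Lemma sofic_group_monoid (M : Type) (mul : M -> M -> M) (one : M) :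
  is_monoid mul one -> sofic_group mul -> sofic_monoid mul one.
Proof.
move=> [_ [mul1m _]] sofG K eps eps0.
have [X [phi [X0 [phi_mul phi_inj]]]] := sofG (one :: K) eps eps0.
exists X, (fun g => phi g); split=> //; split.
  by move=> g h gK hK; apply: phi_inj; right.
split; first by move=> g h gK hK; apply: phi_mul; right.
rewrite -(hamming_compl_inj _ _ (@perm_inj _ (phi one))) hamming_sym.
by have := phi_mul one one (or_introl erefl) (or_introl erefl); rewrite mul1m.
Qed.

Lemma sofic_monoid_group (G : Type) (mul : G -> G -> G) (one : G)
  (inv : G -> G) :
  is_group mul one inv -> sofic_monoid mul one -> sofic_group mul.
Proof.
move=> [_ [_ mulgV]] sofM K eps eps0.
pose K1 :=
  (one :: K ++ List.map (fun p => mul p.1 p.2) (List.list_prod K K))%list.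
pose K' := (K1 ++ List.map inv K1)%list.
have K1K g : List.In g K -> List.In g K1.
  by move=> gK; right; apply: List.in_or_app; left.
have K1_mul g h : List.In g K -> List.In h K -> List.In (mul g h) K1.
  move=> gK hK; right; apply: List.in_or_app; right.
  exact: (List.in_map (fun p => mul p.1 p.2) _ _ (List.in_prod _ _ _ _ gK hK)).
have K'K1 g : List.In g K1 -> List.In g K' /\ List.In (inv g) K'.
  move=> gK1; split; apply: List.in_or_app; first by left.
  by right; apply: List.in_map.
have K'K g : List.In g K -> List.In g K' by move/K1K/K'K1=> [].
set e := eps / 7.
have e0 : 0 < e by rewrite /e; lra.
have [X [phi [X0 [phi_inj [phi_mul phi_one]]]]] := sofM K' e e0.
pose sigma g := perm_approx (phi g) (phi (inv g)).
have sigma_close g : List.In g K1 -> hamming (phi g) (sigma g) <= e + e.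
  move=> /K'K1[gK' igK']; apply: perm_approx_close phi_one.
  by rewrite -(mulgV g); apply: phi_mul.
exists X, sigma; split=> //; split=> g h gK hK.
- apply: le_trans (hamming_perturb_comp (sigma_close _ (K1K _ gK))
    (sigma_close _ (K1K _ hK)) (sigma_close _ (K1_mul _ _ gK hK))
    (phi_mul _ _ (K'K _ gK) (K'K _ hK))) _.
  by rewrite /e; lra.
- move=> gh; apply: le_trans (hamming_perturb (sigma_close _ (K1K _ gK))
    (sigma_close _ (K1K _ hK))).
  by have := phi_inj _ _ (K'K _ gK) (K'K _ hK) gh; rewrite /e; lra.
Qed.

Theorem proposition3p4 (G : Type) (mul : G -> G -> G) (one : G)
  (inv : G -> G) (hG : is_group mul one inv) :
  sofic_group mul <-> sofic_monoid mul one.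
Proof.
split; first exact: sofic_group_monoid hG.1.
exact: sofic_monoid_group hG.
Qed.
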